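(* Let $p,q\in[0,1]$ be rational numbers and $R\in\{\mathrm C,\mathrm S\}$. Then $\mathscr S^{p,q}_{\mathscr F_R}$ is exactly the set of all recursive temporal selection processes.
   Context: $\mathbb N_0=\{0,1,2,\dots\}$. $\mathbb S=\bigcup_{n\in\mathbb N_0}\{0,1\}^n$ is the set of finite binary sequences (situations), $\square$ the empty sequence, $|s|$ the length, $sx$ concatenation. For $r\in[0,1]$ and $f:\{0,1\}\to\mathbb R$, $E_r(f)=rf(1)+(1-r)f(0)$. A real process is a map $F:\mathbb S\to\mathbb R$, and $\Delta F(s)$ is the function $x\mapsto F(sx)-F(s)$. A test process is a non-negative real process with $F(\square)=1$. A map from $\mathbb S$ (or $\mathbb N_0$) to $\mathbb Q$ or $\{0,1\}$ is recursive if it is computable by a Turing machine. $\mathscr F_{\mathrm C}=\mathscr F_{\mathrm S}$ denotes the set of positive, rational-valued, recursive test processes. A selection process is a map $S:\mathbb S\to\{0,1\}$; it is temporal if $S(s)$ depends only on $|s|$ (written $S(n)$). For a real process $F$ and $r\in[0,1]$, $S^r_F$ is the temporal selection process with $S^r_F(n)=1$ if $E_r(\Delta F(s))>0$ for some $s\in\mathbb S$ with $|s|=n$, and $S^r_F(n)=0$ otherwise. For a set $\mathscr F$ of real processes, $\mathscr S^{p,q}_{\mathscr F}=\{S^r_F: F\in\mathscr F,\ r\in\{p,q\}\}$. *)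

From HB Require Import structures.
From mathcomp Require Import all_boot all_order all_algebra.
Set Implicit Arguments.
Unset Strict Implicit.
Unset Printing Implicit Defensive.
Import Order.TTheory GRing.Theory Num.Theory.

Inductive prf : Type :=
| PZero : prf
| PSucc : prf
| PProj : nat -> prf
| PComp : prf -> list prf -> prf
| PPrec : prf -> prf -> prf
| PMin  : prf -> prf.

Inductive evalp : prf -> seq nat -> nat -> Prop :=
| ev_zero v : evalp PZero v 0
| ev_succ x v : evalp PSucc (x :: v) x.+1
| ev_proj i v : (i < size v)%N -> evalp (PProj i) v (nth 0%N v i)
| ev_comp f gs v ys y :
    evalps gs v ys -> evalp f ys y -> evalp (PComp f gs) v y
| ev_prec0 f g v y : evalp f v y -> evalp (PPrec f g) (0%N :: v) y
| ev_precS f g n v y z :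
    evalp (PPrec f g) (n :: v) y -> evalp g (n :: y :: v) z ->
    evalp (PPrec f g) (n.+1 :: v) z
| ev_min f v n :
    evalp f (n :: v) 0 ->
    (forall m, (m < n)%N -> exists k, evalp f (m :: v) k.+1) ->
    evalp (PMin f) v n
with evalps : list prf -> seq nat -> seq nat -> Prop :=
| evs_nil v : evalps nil v [::]
| evs_cons g gs v y ys : evalp g v y -> evalps gs v ys -> evalps (g :: gs) v (y :: ys).

Definition recursive_nat (f : nat -> nat) : Prop :=
  exists e : prf, forall n, evalp e [:: n] (f n).

(* A situation is a [seq bool] (true = 1, false = 0); [rcons s x] is sx. *)

(* Bijective coding of situations by natural numbers. *)
Fixpoint code_sit (s : seq bool) : nat :=
  match s with
  | [::] => 0%N
  | b :: t => (code_sit t).*2 + (if b then 2 else 1)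
  end.

Definition recursive_sit_bool (S : seq bool -> bool) : Prop :=
  exists g : nat -> nat, recursive_nat g /\
    forall s, g (code_sit s) = nat_of_bool (S s).

Local Open Scope ring_scope.

Definition recursive_sit_rat (F : seq bool -> rat) : Prop :=
  exists a b c : nat -> nat,
    [/\ recursive_nat a, recursive_nat b, recursive_nat c &
      forall s, let n := code_sit s in
        F s = ((a n)%:R - (b n)%:R) / ((c n).+1)%:R].

Definition Er (R : numDomainType) (r : R) (f : bool -> R) : R :=
  r * f true + (1 - r) * f false.

Definition DeltaF (R : numDomainType) (F : seq bool -> R) (s : seq bool) : bool -> R :=
  fun x => F (rcons s x) - F s.

Definition test_process (R : numDomainType) (F : seq bool -> R) : Prop :=
  (forall s, 0 <= F s) /\ F [::] = 1.

(* F_C = F_S : positive, rational-valued, recursive test processes. *)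
Definition F_C (F : seq bool -> rat) : Prop :=
  [/\ test_process F, (forall s, 0 < F s) & recursive_sit_rat F].

Definition temporal (S : seq bool -> bool) : Prop :=
  forall s t, size s = size t -> S s = S t.

Definition SrF_nat (R : numDomainType) (r : R) (F : seq bool -> R) (n : nat) : bool :=
  [exists t : n.-tuple bool, 0 < Er r (DeltaF F (tval t))].

Definition SrF (R : numDomainType) (r : R) (F : seq bool -> R) : seq bool -> bool :=
  fun s => SrF_nat r F (size s).

Definition in_Spq_FC (p q : rat) (S : seq bool -> bool) : Prop :=
  exists F : seq bool -> rat, exists r : rat,
    [/\ F_C F, (r = p \/ r = q) & forall s, S s = SrF r F s].

(* Write F = A / C with A and C recursive and r = u / d.  Then E_r(ΔF(t)) > 0 is an
   inequality between natural numbers computed from A and C at the codes of t, t0 and t1,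
   so S^r_F(n), an existential over the finitely many situations of length n, is
   recursive; it is temporal by definition.  Conversely, for a recursive temporal S,
   stake the whole capital on the outcome 1 (on 0 if p = 0) at every time n with
   S(n) = 1.  The capital 2^(number of bets won) is a positive, rational, recursive test
   process whose expected increment under p is positive exactly at the situations s with
   S(|s|) = 1, so S = S^p_F. *)

From mathcomp Require Import all_boot all_order all_algebra.
From mathcomp Require Import zify ring.
Import Order.TTheory GRing.Theory Num.Theory.

Set Implicit Arguments.
Unset Strict Implicit.

(** * Closure properties of mu-recursive functions *)

Fixpoint primrec (i : nat) (h : nat -> nat -> nat) (n : nat) : nat :=
  if n is n'.+1 then h n' (primrec i h n') else i.

Lemma primrec_iter i f n : primrec i (fun _ => f) n = iter n f i.
Proof. by elim: n => //= n ->. Qed.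

Lemma primrec_sum h t n : (forall j a, h j a = a + t j) ->
  primrec 0 h n = \sum_(j < n) t j.
Proof.
by move=> htE; elim: n => [|n IH] /=; rewrite ?big_ord0 // htE IH big_ord_recr.
Qed.

Definition computable k (f : seq nat -> nat) : Prop :=
  exists e, forall v, size v = k -> evalp e v (f v).

Lemma computable_ext k f g : (forall v, size v = k -> f v = g v) ->
  computable k f -> computable k g.
Proof. by move=> fg [e fe]; exists e => v vk; rewrite -fg //; apply: fe. Qed.

Lemma computable_proj k i : i < k -> computable k (fun v => nth 0 v i).
Proof. by move=> ik; exists (PProj i) => v vk; apply: ev_proj; rewrite vk. Qed.

Lemma computable_succ k f : computable k f -> computable k (fun v => (f v).+1).
Proof.
move=> [e fe]; exists (PComp PSucc [:: e]) => v vk.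
by apply: (ev_comp (ys := [:: f v])); repeat constructor; apply: fe.
Qed.

Lemma computable_cst k n : computable k (fun _ => n).
Proof.
elim: n => [|n]; last exact: computable_succ.
by exists PZero => v _; constructor.
Qed.

Fixpoint all_computable k (fs : seq (seq nat -> nat)) : Prop :=
  if fs is f :: fs' then computable k f /\ all_computable k fs' else True.

Lemma computable_comp k m f gs : computable m f -> size gs = m -> all_computable k gs ->
  computable k (fun v => f (map (fun g => g v) gs)).
Proof.
move=> [ef fe] gsm gsP.
have [es esP] : exists es, forall v, size v = k -> evalps es v (map (fun g => g v) gs).
  elim: gs gsP {ef fe gsm} => [|g gs IH] /= => [_|[[e ge] /IH [es esP]]].
    by exists nil => v _; constructor.
  by exists (e :: es) => v vk; constructor; auto.
by exists (PComp ef es) => v vk; apply: ev_comp (esP v vk) _; apply: fe; rewrite size_map.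
Qed.

Lemma computable_primrec k f h : computable k f -> computable k.+2 h ->
  computable k.+1
    (fun v => primrec (f (behead v)) (fun j a => h (j :: a :: behead v)) (head 0 v)).
Proof.
move=> [ef fe] [eh he]; exists (PPrec ef eh) => -[|n w] //= [wk].
elim: n => [|n IH] /=; first by apply: ev_prec0; apply: fe.
by apply: ev_precS IH _; apply: he; rewrite /= wk.
Qed.

Definition computable1 (f : nat -> nat) := computable 1 (fun v => f (nth 0 v 0)).

Definition computable2 (op : nat -> nat -> nat) :=
  computable 2 (fun v => op (nth 0 v 0) (nth 0 v 1)).

Lemma computable_op1 k f g : computable1 f -> computable k g ->
  computable k (fun v => f (g v)).
Proof. by move=> fP gP; exact: (computable_comp (gs := [:: g]) fP erefl (conj gP I)). Qed.

Lemma computable_op k op f g : computable2 op -> computable k f -> computable k g ->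
  computable k (fun v => op (f v) (g v)).
Proof.
by move=> opP fP gP; exact: (computable_comp (gs := [:: f; g]) opP erefl (conj fP (conj gP I))).
Qed.

Lemma computable2_addn : computable2 addn.
Proof.
have := computable_primrec (computable_proj (isT : 0 < 1))
  (computable_succ (computable_proj (isT : 1 < 3))).
apply: computable_ext => -[|x [|y []]] //= _.
by elim: x => //= x ->.
Qed.

Lemma computable1_pred : computable1 predn.
Proof.
have := computable_primrec (computable_cst 0 0) (computable_proj (isT : 0 < 2)).
by apply: computable_ext => -[|[|x] []].
Qed.

Lemma computable2_subn : computable2 subn.
Proof.
have subr : computable2 (fun x y => y - x).
  have := computable_primrec (computable_proj (isT : 0 < 1))
    (computable_op1 computable1_pred (computable_proj (isT : 1 < 3))).
  apply: computable_ext => -[|x [|y []]] //= _.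
  by elim: x => //= [|x ->]; rewrite ?subn0 ?subnS.
exact: computable_op subr (computable_proj (isT : 1 < 2)) (computable_proj (isT : 0 < 2)).
Qed.

Lemma computable2_muln : computable2 muln.
Proof.
have := computable_primrec (computable_cst 1 0) (computable_op computable2_addn
  (computable_proj (isT : 1 < 3)) (computable_proj (isT : 2 < 3))).
apply: computable_ext => -[|x [|y []]] //= _.
by elim: x => //= x ->; rewrite mulSn addnC.
Qed.

Lemma computable2_ltn : computable2 (fun x y => x < y).
Proof.
have subP : computable 2 (fun v => nth 0 v 1 - nth 0 v 0).
  by apply: computable_op computable2_subn _ _; apply: computable_proj.
have := computable_op computable2_subn (computable_cst 2 1)
  (computable_op computable2_subn (computable_cst 2 1) subP).
by apply: computable_ext => -[|x [|y []]] //= _; case: ltnP; lia.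
Qed.

Lemma computable2_eqn : computable2 (fun x y => x == y).
Proof.
have subP i j : i < 2 -> j < 2 -> computable 2 (fun v => nth 0 v i - nth 0 v j).
  by move=> i2 j2; apply: computable_op computable2_subn _ _; apply: computable_proj.
have := computable_op computable2_subn (computable_cst 2 1)
  (computable_op computable2_addn (subP 0 1 isT isT) (subP 1 0 isT isT)).
by apply: computable_ext => -[|x [|y []]] //= _; case: eqP; lia.
Qed.

Lemma recursive_nat_computable1 f : recursive_nat f <-> computable1 f.
Proof.
split=> [[e fe]|[e fe]]; first by exists e => -[|n []].
by exists e => n; apply: (fe [:: n]).
Qed.

Inductive nexpr : Type :=
| EVar of nat
| ECst of nat
| ECall of (nat -> nat) & nexpr
| EOp of (nat -> nat -> nat) & nexpr & nexpr
| ERec of nexpr & nexpr & nexpr.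

Fixpoint eval (e : nexpr) (v : seq nat) : nat :=
  match e with
  | EVar i => nth 0 v i
  | ECst n => n
  | ECall f a => f (eval a v)
  | EOp op a b => op (eval a v) (eval b v)
  | ERec n i h => primrec (eval i v) (fun j a => eval h (j :: a :: v)) (eval n v)
  end.

(* In [ERec n i h], variables 0 and 1 of [h] are the recursion index and the previous value. *)
Fixpoint wf_nexpr k (e : nexpr) : Prop :=
  match e with
  | EVar i => i < k
  | ECst _ => True
  | ECall f a => recursive_nat f /\ wf_nexpr k a
  | EOp op a b => [/\ computable2 op, wf_nexpr k a & wf_nexpr k b]
  | ERec n i h => [/\ wf_nexpr k n, wf_nexpr k i & wf_nexpr k.+2 h]
  end.

Lemma computable_eval e k : wf_nexpr k e -> computable k (eval e).
Proof.
elim: e k => [i|n|f a IHa|op a IHa b IHb|n IHn i IHi h IHh] k /=.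
- exact: computable_proj.
- by move=> _; apply: computable_cst.
- by move=> [/recursive_nat_computable1 fP /IHa aP]; apply: computable_op1.
- by move=> [opP /IHa aP /IHb bP]; apply: computable_op.
- move=> [/IHn nP /IHi iP /IHh hP].
  (* [PPrec] recurses on its first argument: the context [v] is passed back by projections. *)
  have projs : all_computable k [seq (nth 0)^~ j | j <- iota 0 k].
    have : all (fun j => j < k) (iota 0 k) by apply/allP => j; rewrite mem_iota.
    by elim: (iota 0 k) => //= j l IH /andP [jk /IH]; split => //; apply: computable_proj.
  have := computable_comp (gs := eval n :: [seq (nth 0)^~ j | j <- iota 0 k])
    (computable_primrec iP hP).
  rewrite /= size_map size_iota => /(_ k erefl (conj nP projs)).
  apply: computable_ext => v vk /=.
  by rewrite -map_comp /= -[X in iota 0 X]vk -/(mkseq _ _) mkseq_nth.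
Qed.

Lemma recursive_nat_eval e f : wf_nexpr 1 e -> (forall n, eval e [:: n] = f n) ->
  recursive_nat f.
Proof.
move=> /computable_eval eP ef; apply/recursive_nat_computable1.
by apply: computable_ext eP => -[|n []] //= _; rewrite ef.
Qed.

#[local] Hint Resolve computable2_addn computable2_subn computable2_muln
  computable2_ltn computable2_eqn : core.

Lemma recursive_half : recursive_nat half.
Proof.
pose e := ERec (EVar 0) (ECst 0)
  (EOp addn (EVar 1) (EOp subn (EVar 0) (EOp addn (EVar 1) (EVar 1)))).
apply: (recursive_nat_eval (e := e)) => [|n]; first by repeat split; auto.
rewrite /=; elim: n => //= n ->.
by rewrite uphalf_half; move: (odd_double_half n); rewrite -addnn; lia.
Qed.

Lemma recursive_exp2 : recursive_nat (expn 2).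
Proof.
apply: (recursive_nat_eval (e := ERec (EVar 0) (ECst 1) (EOp addn (EVar 1) (EVar 1)))).
  by repeat split; auto.
by elim=> //= n ->; rewrite expnS; lia.
Qed.

Lemma recursive_odd : recursive_nat (fun n => odd n).
Proof.
apply: (recursive_nat_eval (e := EOp subn (EVar 0) (EOp muln (ECst 2) (ECall half (EVar 0))))).
  by repeat split; auto; apply: recursive_half.
by move=> n /=; move: (odd_double_half n); rewrite -addnn; lia.
Qed.

Definition EIter n f x := ERec n x (ECall f (EVar 1)).

Definition code_tail (n : nat) : nat := n.-1./2.

Lemma recursive_code_tail : recursive_nat code_tail.
Proof.
apply: (recursive_nat_eval (e := ECall half (EOp subn (EVar 0) (ECst 1)))).
  by repeat split; auto; apply: recursive_half.
by move=> n; rewrite /= subn1.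
Qed.

Lemma code_tail_cons b t : code_tail (code_sit (b :: t)) = code_sit t.
Proof. by case: b; rewrite /code_tail /= ?addn2 ?addn1 /= ?uphalf_double ?doubleK. Qed.

Lemma iter_code_tail i s : iter i code_tail (code_sit s) = code_sit (drop i s).
Proof.
elim: i s => [|i IH] s; first by rewrite drop0.
rewrite iterSr; case: s => [|b t]; last by rewrite code_tail_cons IH.
by elim: i {IH} => //= i ->.
Qed.

Lemma code_sit_gt0 s : (0 < code_sit s) = (s != [::]).
Proof. by case: s => //= b t; case: b; rewrite addn_gt0 orbT. Qed.

Lemma odd_code_sit_cons b t : odd (code_sit (b :: t)) = ~~ b.
Proof. by case: b; rewrite /= oddD odd_double. Qed.

Lemma size_le_code_sit s : size s <= code_sit s.
Proof. by elim: s => //= b t IH; rewrite -addnn; case: b; lia. Qed.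

Lemma code_sit_lt s : (code_sit s).+1 < 2 ^ (size s).+1.
Proof. by elim: s => //= b t; rewrite !expnS -addnn; case: b; lia. Qed.

Lemma code_sit_rcons t x :
  code_sit (rcons t x) = code_sit t + (if x then 2 else 1) * 2 ^ size t.
Proof. by elim: t => [|b t IH] /=; [case: x | rewrite IH expnS -!addnn; case: b; lia]. Qed.

Lemma code_sit_nseq_false i : code_sit (nseq i false) = 2 ^ i - 1.
Proof.
elim: i => //= i ->; rewrite expnS -addnn.
by have := expn_gt0 2 i; lia.
Qed.

Lemma code_sit_surj n : exists s, code_sit s = n.
Proof.
elim/ltn_ind: n => -[_|n IH]; first by exists [::].
have [s sE] : exists s, code_sit s = n./2.
  by apply: IH; rewrite ltnS leq_half_double -addnn; lia.
exists (odd n :: s); rewrite /= sE; move: (odd_double_half n).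
by rewrite -addnn; case: (odd n) => /=; lia.
Qed.

Definition size_of_code (n : nat) : nat := \sum_(j < n) (0 < iter j code_tail n).

Lemma recursive_size_of_code : recursive_nat size_of_code.
Proof.
pose e := ERec (EVar 0) (ECst 0)
  (EOp addn (EVar 1) (EOp (fun x y => x < y) (ECst 0) (EIter (EVar 0) code_tail (EVar 2)))).
apply: (recursive_nat_eval (e := e)) => [|n].
  by repeat split; auto; apply: recursive_code_tail.
rewrite /size_of_code /= (primrec_sum (t := fun j => 0 < iter j code_tail n)) // => j a.
by rewrite /= -primrec_iter.
Qed.

Lemma sum_ord_trunc (f : nat -> nat) m n : m <= n -> (forall j, m <= j -> f j = 0) ->
  \sum_(j < n) f j = \sum_(j < m) f j.
Proof.
move=> mn f0; rewrite (big_ord_widen n f mn) [RHS]big_mkcond.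
by apply: eq_bigr => j _; case: ltnP => // /f0.
Qed.

Lemma size_of_code_sit s : size_of_code (code_sit s) = size s.
Proof.
have tailE j : (0 < iter j code_tail (code_sit s)) = (j < size s).
  by rewrite iter_code_tail code_sit_gt0 -size_eq0 size_drop subn_eq0 -ltnNge.
rewrite /size_of_code; under eq_bigr => j _ do rewrite tailE.
rewrite (sum_ord_trunc (f := fun j => nat_of_bool (j < size s)) (size_le_code_sit s)).
  by rewrite -[RHS]card_ord -sum1_card; apply: eq_bigr => j _; rewrite ltn_ord.
by move=> j; rewrite ltnNge => ->.
Qed.

Definition recursive_sit (f : seq bool -> nat) : Prop :=
  exists g, recursive_nat g /\ forall s, g (code_sit s) = f s.

Lemma recursive_sit_exists_tuple (P : seq bool -> bool) : recursive_sit_bool P ->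
  recursive_sit_bool (fun s => [exists t : (size s).-tuple bool, P t]).
Proof.
move=> [g [gP gE]].
(* Every situation of length [size_of_code n] has a code below [2 ^ (size_of_code n).+1]. *)
pose G n := (0 < \sum_(m < 2 ^ (size_of_code n).+1) (size_of_code m == size_of_code n) * g m).
have GP : recursive_nat G.
  pose e := EOp (fun x y => x < y) (ECst 0)
    (ERec (ECall (expn 2) (EOp addn (ECall size_of_code (EVar 0)) (ECst 1))) (ECst 0)
      (EOp addn (EVar 1) (EOp muln
        (EOp (fun x y => x == y) (ECall size_of_code (EVar 0)) (ECall size_of_code (EVar 2)))
        (ECall g (EVar 0))))).
  apply: (recursive_nat_eval (e := e)) => [|n].
    by repeat split; auto; apply: recursive_exp2 || apply: recursive_size_of_code.
  by rewrite /G /= addn1 (primrec_sum (t := fun m => (size_of_code m == size_of_code n) * g m)).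
exists G; split=> // s; congr nat_of_bool.
rewrite /G size_of_code_sit lt0n sum_nat_eq0 negb_forall.
apply/existsP/existsP => [[m] | [t Pt]].
- have [t <-] := code_sit_surj m.
  rewrite gE size_of_code_sit muln_eq0 !eqb0 negb_or !negbK => /andP [/eqP ts Pt].
  by exists (Tuple (introT eqP ts)).
- have := code_sit_lt t; rewrite size_tuple => /ltnW ts.
  by exists (Ordinal ts); rewrite /= gE size_of_code_sit size_tuple eqxx Pt.
Qed.

Definition code_child (x : bool) (n : nat) : nat :=
  n + (if x then 2 else 1) * 2 ^ size_of_code n.

Lemma code_child_code x t : code_child x (code_sit t) = code_sit (rcons t x).
Proof. by rewrite /code_child size_of_code_sit code_sit_rcons. Qed.

Lemma recursive_code_child x : recursive_nat (code_child x).
Proof.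
pose e := EOp addn (EVar 0)
  (EOp muln (ECst (if x then 2 else 1)) (ECall (expn 2) (ECall size_of_code (EVar 0)))).
apply: (recursive_nat_eval (e := e)) => //.
by repeat split; auto; apply: recursive_exp2 || apply: recursive_size_of_code.
Qed.

(** * Recursiveness of the selection processes S^r_F *)

Section RationalArithmetic.
Local Open Scope ring_scope.

Lemma Er_DeltaF_gt0 (F : seq bool -> rat) (A C : seq bool -> nat) (u d : nat) t :
  (forall s, F s = (A s)%:R / (C s)%:R) -> (forall s, (0 < C s)%N) ->
  (0 < d)%N -> (u <= d)%N ->
  let t1 := rcons t true in let t0 := rcons t false in
  (0 < Er (u%:R / d%:R) (DeltaF F t)) =
  (d * A t * C t1 * C t0 < u * A t1 * C t * C t0 + (d - u) * A t0 * C t * C t1)%N.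
Proof.
move=> FE C_gt0 d_gt0 ud t1 t0.
have pos n : 0 < n%:R :> rat = (0 < n)%N by rewrite ltr0n.
have den_gt0 : 0 < d%:R * (C t)%:R * (C t1)%:R * (C t0)%:R :> rat.
  by rewrite !mulr_gt0 ?pos.
rewrite -(pmulr_lgt0 _ den_gt0) -(ltr_nat rat) -subr_gt0; congr (0 < _).
rewrite /Er /DeltaF !FE natrD !natrM natrB //.
by field; rewrite !pnatr_eq0 -!lt0n d_gt0 !C_gt0.
Qed.

Lemma rat_unit_interval_frac (r : rat) : 0 <= r <= 1 ->
  exists u d : nat, [/\ (0 < d)%N, (u <= d)%N & r = u%:R / d%:R].
Proof.
move=> /andP [r_ge0 r_le1]; set u := `|numq r|%N; set d := `|denq r|%N.
have d_gt0 : (0 < d)%N by rewrite absz_gt0 gt_eqF ?denq_gt0.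
have rE : r = u%:R / d%:R.
  by rewrite !natr_absz (ger0_norm (ltW (denq_gt0 r))) ger0_norm ?numq_ge0 ?divq_num_den.
exists u, d; split=> //.
by move: r_le1; rewrite rE ler_pdivrMr ?ltr0n // mul1r ler_nat.
Qed.

End RationalArithmetic.

Lemma recursive_sit_Er_gt0 (F : seq bool -> rat) (r : rat) : F_C F -> (0 <= r <= 1)%R ->
  recursive_sit_bool (fun t => (0 < Er r (DeltaF F t))%R).
Proof.
move=> [_ F_gt0 [a [b [c [aP bP cP FE]]]]] /rat_unit_interval_frac [u [d [d_gt0 ud ->]]].
pose A n := a n - b n; pose C n := (c n).+1.
have FAC s : F s = ((A (code_sit s))%:R / (C (code_sit s))%:R)%R.
  have := F_gt0 s; rewrite FE /A /C => F_pos; rewrite natrB //.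
  by move: F_pos; rewrite pmulr_lgt0 ?invr_gt0 ?ltr0n // subr_gt0 ltr_nat => /ltnW.
pose H n := d * A n * C (code_child true n) * C (code_child false n) <
  u * A (code_child true n) * C n * C (code_child false n)
  + (d - u) * A (code_child false n) * C n * C (code_child true n).
exists H; split; last first.
  by move=> t; rewrite /H !code_child_code (Er_DeltaF_gt0 _ FAC).
pose child x := ECall (code_child x) (EVar 0).
pose eA x := EOp subn (ECall a x) (ECall b x).
pose eC x := EOp addn (ECall c x) (ECst 1).
pose mul4 w x y z := EOp muln (EOp muln (EOp muln w x) y) z.
pose e := EOp (fun x y => x < y)
  (mul4 (ECst d) (eA (EVar 0)) (eC (child true)) (eC (child false)))
  (EOp addn (mul4 (ECst u) (eA (child true)) (eC (EVar 0)) (eC (child false)))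
            (mul4 (ECst (d - u)) (eA (child false)) (eC (EVar 0)) (eC (child true)))).
apply: (recursive_nat_eval (e := e)) => [|n]; last by rewrite /= !addn1.
by repeat split; auto; apply: recursive_code_child.
Qed.

Lemma temporal_SrF (r : rat) (F : seq bool -> rat) : temporal (SrF r F).
Proof. by move=> s t st; rewrite /SrF st. Qed.

Lemma recursive_SrF (F : seq bool -> rat) (r : rat) : F_C F -> (0 <= r <= 1)%R ->
  recursive_sit_bool (SrF r F).
Proof. by move=> FC r01; apply: recursive_sit_exists_tuple (recursive_sit_Er_gt0 FC r01). Qed.

(** * The doubling process *)

Lemma recursive_sit_count_matches (x0 : bool) (T : nat -> nat) : recursive_nat T ->
  recursive_sit (fun s => \sum_(j < size s) (nth false s j == x0) * T j).
Proof.
move=> TP.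
pose t n j := (0 < iter j code_tail n) * (odd (iter j code_tail n) == ~~ x0 :> nat) * T j.
exists (fun n => \sum_(j < n) t n j); split=> [|s].
  pose it := EIter (EVar 0) code_tail (EVar 2).
  pose e := ERec (EVar 0) (ECst 0) (EOp addn (EVar 1) (EOp muln
    (EOp muln (EOp (fun x y => x < y) (ECst 0) it)
              (EOp (fun x y => x == y) (ECall (fun n => odd n) it) (ECst (~~ x0))))
    (ECall T (EVar 0)))).
  apply: (recursive_nat_eval (e := e)) => [|n].
    by repeat split; auto; apply: recursive_code_tail || apply: recursive_odd.
  by rewrite /= (primrec_sum (t := t n)) // => j a; rewrite /= !primrec_iter.
rewrite (sum_ord_trunc (f := t (code_sit s)) (size_le_code_sit s)) => [|j js]; last first.
  by rewrite /t iter_code_tail drop_oversize.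
apply: eq_bigr => j _; rewrite /t iter_code_tail (drop_nth false (ltn_ord j)).
by rewrite code_sit_gt0 odd_code_sit_cons; clear t; case: (nth false s j); case: x0.
Qed.

Lemma recursive_sit_bool_nseq (S : seq bool -> bool) : recursive_sit_bool S ->
  recursive_nat (fun j => S (nseq j false)).
Proof.
move=> [g [gP gE]].
apply: (recursive_nat_eval (e := ECall g (EOp subn (ECall (expn 2) (EVar 0)) (ECst 1)))).
  by repeat split; auto; apply: recursive_exp2.
by move=> j; rewrite /= -code_sit_nseq_false gE.
Qed.

Section DoublingProcess.
Local Open Scope ring_scope.
Variables (x0 : bool) (T : nat -> bool).

Definition doubling_process (s : seq bool) : rat :=
  (2 ^ \sum_(j < size s) (nth false s j == x0) * T j)%:R.

Lemma doubling_process_gt0 s : 0 < doubling_process s.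
Proof. by rewrite ltr0n expn_gt0. Qed.

Lemma doubling_process_rcons t x : doubling_process (rcons t x) =
  (if (x == x0) && T (size t) then 2 else 1) * doubling_process t.
Proof.
rewrite /doubling_process size_rcons big_ord_recr /= nth_rcons ltnn eqxx expnD natrM mulrC.
congr (_ * _); first by case: (x == x0); case: (T _).
by congr (2 ^ _)%:R; apply: eq_bigr => j _; rewrite nth_rcons ltn_ord.
Qed.

Lemma Er_DeltaF_doubling p t : Er p (DeltaF doubling_process t) =
  if T (size t) then (if x0 then p else 1 - p) * doubling_process t else 0.
Proof.
rewrite /Er /DeltaF !doubling_process_rcons.
by case: (T _); case: x0 => /=; ring.
Qed.

Lemma SrF_doubling p n : 0 <= p -> x0 = (0 < p) -> SrF_nat p doubling_process n = T n.
Proof.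
move=> p_ge0 x0E.
have stake_gt0 : 0 < (if x0 then p else 1 - p).
  by rewrite x0E; case: (ltrP 0 p) => // p_le0; rewrite subr_gt0 (le_lt_trans p_le0) ?ltr01.
case Tn: (T n); apply/existsP.
- exists (nseq_tuple n false).
  by rewrite Er_DeltaF_doubling size_nseq Tn mulr_gt0 ?doubling_process_gt0.
- by move=> [t]; rewrite Er_DeltaF_doubling size_tuple Tn ltxx.
Qed.

Lemma F_C_doubling : recursive_nat (fun n => T n) -> F_C doubling_process.
Proof.
move=> /(recursive_sit_count_matches x0) [g [gP gE]].
split.
- split=> [s|]; first exact: ltW (doubling_process_gt0 s).
  by rewrite /doubling_process big_ord0.
- exact: doubling_process_gt0.
- exists (fun n => 2 ^ g n)%N, (fun _ => 0)%N, (fun _ => 0)%N; split.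
  + apply: (recursive_nat_eval (e := ECall (expn 2) (ECall g (EVar 0)))) => //.
    by repeat split; [apply: recursive_exp2 | apply: gP].
  + exact: (recursive_nat_eval (e := ECst 0)).
  + exact: (recursive_nat_eval (e := ECst 0)).
  + by move=> s; rewrite /= gE subr0 divr1.
Qed.

End DoublingProcess.

Lemma in_Spq_FC_of_recursive (p q : rat) (S : seq bool -> bool) : (0 <= p)%R ->
  temporal S -> recursive_sit_bool S -> in_Spq_FC p q S.
Proof.
move=> p_ge0 tS SP.
exists (doubling_process (0 < p)%R (fun j => S (nseq j false))), p; split; last 1 first.
- by move=> s; rewrite /SrF SrF_doubling //; apply: tS; rewrite size_nseq.
- exact: F_C_doubling (recursive_sit_bool_nseq SP).
- by left.
Qed.

Theorem proposition27 (p q : rat) :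
  (0 <= p <= 1)%R -> (0 <= q <= 1)%R ->
  forall S : seq bool -> bool,
    in_Spq_FC p q S <-> (temporal S /\ recursive_sit_bool S).
Proof.
move=> p01 q01 S; split=> [[F [r [FC r_pq SE]]] | [tS SP]].
- have r01 : (0 <= r <= 1)%R by case: r_pq => ->.
  split=> [s t st | ]; first by rewrite !SE; apply: temporal_SrF.
  have [g [gP gE]] := recursive_SrF FC r01.
  by exists g; split=> // s; rewrite SE.
- by apply: in_Spq_FC_of_recursive => //; case/andP: p01.
Qed.
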